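(* Let $X,Y_1,Y_2$ be Hilbert spaces and $\mathcal A_i:Y_i\to X$, $i=1,2$, bounded linear operators. Suppose $\xi\in\operatorname{ran}\mathcal A_1$ but $\xi\notin\operatorname{ran}\mathcal A_2$. For $\alpha>0$ let $$\eta_\alpha:=(\mathcal A_2\mathcal A_2^*+\alpha I)^{-1}[\xi],\qquad\xi_\alpha:=\frac{\eta_\alpha}{\langle\xi,\eta_\alpha\rangle^{3/4}}.$$ Then $\langle\xi,\eta_\alpha\rangle>0$, $\lim_{\alpha\to0+}\|\mathcal A_1^*[\xi_\alpha]\|=\infty$ and $\lim_{\alpha\to0+}\mathcal A_2^*[\xi_\alpha]=0$. *)

From HB Require Import structures.
From mathcomp Require Import all_boot all_order all_algebra.
From mathcomp Require Import all_classical all_reals all_analysis.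
Import Order.TTheory GRing.Theory Num.Theory.
Set Implicit Arguments. Unset Strict Implicit. Unset Printing Implicit Defensive.
Local Open Scope ring_scope.

(* A (real) inner product on a normed space V that induces its norm.
   A Hilbert space is a complete normed space (completeNormedModType R)
   equipped with such an inner product. *)
Record inner_product (R : realType) (V : normedModType R) := InnerProduct {
  ip :> V -> V -> R;
  ip_sym : forall x y, ip x y = ip y x;
  ip_linearl : forall (a : R) (x y z : V), ip (a *: x + y) z = a * ip x z + ip y z;
  ip_norm : forall x, ip x x = `|x| ^+ 2
}.

Definition is_adjoint (R : realType) (X Y : normedModType R)
  (ipX : inner_product X) (ipY : inner_product Y) (A : Y -> X) (As : X -> Y) : Prop :=
  forall (y : Y) (x : X), ipX (A y) x = ipY y (As x).

From HB Require Import structures.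
From mathcomp Require Import all_boot all_order all_algebra.
From mathcomp Require Import all_classical all_reals all_analysis.
From mathcomp Require Import ring lra.
Import Order.TTheory GRing.Theory Num.Theory.
Set Implicit Arguments. Unset Strict Implicit. Unset Printing Implicit Defensive.
Local Open Scope ring_scope.
Local Open Scope classical_set_scope.

(* Write s(a) = <xi, eta a> and w a = A2^* (eta a). Pairing the normal equation
   A2 (w a) + a eta a = xi with eta a gives s(a) = |w a|^2 + a |eta a|^2, so s > 0
   (eta a = 0 would put xi in the range of A2); pairing the equations at a and b
   gives s(b) - s(a) - |w a - w b|^2 = b |eta a - eta b|^2 + (a - b) |eta a|^2, so
   s is nonincreasing and controls the oscillation of w. If s stayed bounded as
   a -> 0+, then s would converge, w would be Cauchy with a limit y, and
   A2 (w a) = xi - a eta a -> xi since |a eta a|^2 <= a s(a); thus A2 y = xi.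
   Hence s -> +oo. With p = s^(1/4), |A2^* (xi_ a)| = |w a| / p^3 <= 1 / p, while
   xi = A1 y1 gives s <= |y1| |A1^* (eta a)|, i.e. |A1^* (xi_ a)| >= p / |y1|. *)

Section InnerProduct.
Variables (R : realType) (V : normedModType R) (ip : inner_product V).

Lemma ip0l z : ip 0 z = 0.
Proof. by have := ip_linearl ip 1 0 0 z; rewrite scaler0 addr0 mul1r; lra. Qed.

Lemma ipDl x y z : ip (x + y) z = ip x z + ip y z.
Proof. by rewrite -[ip x z]mul1r -ip_linearl scale1r. Qed.

Lemma ipZl a x z : ip (a *: x) z = a * ip x z.
Proof. by rewrite -[a *: x]addr0 ip_linearl ip0l addr0. Qed.

Lemma ipBl x y z : ip (x - y) z = ip x z - ip y z.
Proof. by rewrite ipDl -scaleN1r ipZl mulN1r. Qed.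

Lemma ip0r z : ip z 0 = 0.
Proof. by rewrite ip_sym ip0l. Qed.

Lemma ipZr a x z : ip z (a *: x) = a * ip z x.
Proof. by rewrite ip_sym ipZl ip_sym. Qed.

Lemma ipBr x y z : ip z (x - y) = ip z x - ip z y.
Proof. by rewrite ip_sym ipBl !(ip_sym _ z). Qed.

Lemma ip_eq0 x : ip x x = 0 -> x = 0.
Proof. by rewrite ip_norm => /eqP; rewrite sqrf_eq0 normr_eq0 => /eqP. Qed.

Lemma ip_le_mul_norm x y : ip x y <= `|x| * `|y|.
Proof.
have [->|x0] := eqVneq x 0; first by rewrite ip0l normr0 mul0r.
have [->|y0] := eqVneq y 0; first by rewrite ip0r normr0 mulr0.
have xy_gt0 : 0 < `|x| * `|y| by rewrite mulr_gt0 ?normr_gt0.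
(* |(|y| x - |x| y)|^2 = 2 |x| |y| (|x| |y| - ip x y) *)
have := sqr_ge0 `| `|y| *: x - `|x| *: y|; rewrite -(ip_norm ip).
by rewrite !(ipBl, ipBr, ipZl, ipZr) (ip_sym _ y x) !ip_norm; nra.
Qed.

End InnerProduct.

Lemma adjointZ (R : realType) (X Y : normedModType R)
    (ipX : inner_product X) (ipY : inner_product Y) (A : Y -> X) (As : X -> Y) :
  is_adjoint ipX ipY A As -> forall a x, As (a *: x) = a *: As x.
Proof.
move=> hAs a x; apply/subr0_eq/(@ip_eq0 _ _ ipY).
set z := _ - _.
by rewrite {2}/z ipBr ipZr -!hAs ipZr subrr.
Qed.

Lemma powRrMn (R : realType) (x r : R) n : 0 <= x -> x `^ (r * n%:R) = (x `^ r) ^+ n.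
Proof. by move=> x0; rewrite powRrM powR_mulrn ?powR_ge0. Qed.

Lemma cvgy_powR (R : realType) T (F : set_system T) {FF : Filter F} (f : T -> R) r :
  0 < r -> f @ F --> +oo -> f x `^ r @[x --> F] --> +oo.
Proof.
move=> r0 /cvgryPge fy; apply/cvgryPge => M; near=> x.
have M1 : 0 <= Num.max M 1 `^ r^-1 by rewrite powR_ge0.
apply: (@le_trans _ _ (Num.max M 1 `^ r^-1 `^ r)).
  by rewrite -powRrM mulVf ?gt_eqF // powRr1 ?le_max ?lexx // ler01 orbT.
apply: ge0_ler_powR; rewrite ?nnegrE ?(ltW r0) //.
  by apply: le_trans M1 _; near: x; exact: fy.
by near: x; exact: fy.
Unshelve. all: by end_near.
Qed.

Section TikhonovRegularization.
Variables (R : realType) (X Y : normedModType R).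
Variables (ipX : inner_product X) (ipY : inner_product Y).
Variables (A : {linear Y -> X}) (As : X -> Y) (hAs : is_adjoint ipX ipY A As).
Variables (xi : X) (eta : R -> X).
Hypothesis heta : forall a, 0 < a -> A (As (eta a)) + a *: eta a = xi.

Local Notation s a := (ipX xi (eta a)).
Local Notation w a := (As (eta a)).

Lemma tikhonov_residual a : 0 < a -> A (w a) = xi - a *: eta a.
Proof. by move=> a0; rewrite -(heta a0) addrK. Qed.

Lemma tikhonov_ip_sqr_norm a : 0 < a -> s a = `|w a| ^+ 2 + a * `|eta a| ^+ 2.
Proof. by move=> a0; rewrite -{1}(heta a0) ipDl ipZl hAs !ip_norm. Qed.

Lemma tikhonov_ip_gt0 a : ~ (exists y, A y = xi) -> 0 < a -> 0 < s a.
Proof.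
move=> xi_notin_ran a0; rewrite tikhonov_ip_sqr_norm //.
have [eta0|eta_neq0] := eqVneq (eta a) 0.
  by case: xi_notin_ran; exists (w a); rewrite -(heta a0) eta0 scaler0 addr0.
by rewrite ltr_wpDl ?sqr_ge0 // mulr_gt0 // exprn_gt0 // normr_gt0.
Qed.

Lemma tikhonov_ip_sub a b : 0 < a -> 0 < b ->
  s b - s a - `|w a - w b| ^+ 2 = b * `|eta a - eta b| ^+ 2 + (a - b) * `|eta a| ^+ 2.
Proof.
move=> a0 b0.
have sb : s b = ipY (w a) (w b) + a * ipX (eta a) (eta b).
  by rewrite -{1}(heta a0) ipDl ipZl hAs.
have sa : s a = ipY (w a) (w b) + b * ipX (eta a) (eta b).
  by rewrite -{1}(heta b0) ipDl ipZl hAs ip_sym (ip_sym ipX).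
have dw : `|w a - w b| ^+ 2 = ipX (b *: eta b - a *: eta a) (eta a - eta b).
  rewrite -(ip_norm ipY) ipBr -!hAs -ipBr linearB /= !tikhonov_residual //.
  by rewrite opprB addrC addrA subrK.
rewrite sb sa dw -!(ip_norm ipX) !(ipBl, ipBr, ipZl, ipZr) (ip_sym ipX (eta b)).
ring.
Qed.

Lemma tikhonov_sqr_norm_le a : 0 < a -> `|w a| ^+ 2 <= s a.
Proof.
by move=> a0; rewrite tikhonov_ip_sqr_norm // lerDl mulr_ge0 ?sqr_ge0 // ltW.
Qed.

Lemma tikhonov_sqr_dist_le a b : 0 < b -> b <= a -> `|w a - w b| ^+ 2 <= s b - s a.
Proof.
move=> b0 ba; rewrite -subr_ge0 (tikhonov_ip_sub (lt_le_trans b0 ba) b0).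
by rewrite addr_ge0 // mulr_ge0 ?sqr_ge0 ?subr_ge0 // ltW.
Qed.

Lemma tikhonov_ip_nonincreasing a b : 0 < b -> b <= a -> s a <= s b.
Proof.
by move=> b0 ba; rewrite -subr_ge0 (le_trans _ (tikhonov_sqr_dist_le b0 ba)) ?sqr_ge0.
Qed.

Lemma tikhonov_sqr_dist_le_abs a b : 0 < a -> 0 < b -> `|w a - w b| ^+ 2 <= `|s a - s b|.
Proof.
move=> a0 b0; have [ba|/ltW ab] := leP b a.
  rewrite [`|s a - _|]distrC ger0_norm ?subr_ge0 ?tikhonov_ip_nonincreasing //.
  exact: tikhonov_sqr_dist_le.
rewrite [`|w a - _|]distrC ger0_norm ?subr_ge0 ?tikhonov_ip_nonincreasing //.
exact: tikhonov_sqr_dist_le.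
Qed.

Lemma tikhonov_sqr_residual_le a : 0 < a -> `|xi - A (w a)| ^+ 2 <= a * s a.
Proof.
move=> a0; rewrite tikhonov_residual // opprB addrC subrK normrZ gtr0_norm //.
rewrite tikhonov_ip_sqr_norm // exprMn expr2 -mulrA ler_pM2l // lerDr sqr_ge0 //.
Qed.

End TikhonovRegularization.

Section SqrNormCauchy.
Import numFieldNormedType.Exports.

Lemma cauchy_sqr_norm_le (R : realType) T (F : set_system T) {FF : Filter F}
    (V : normedModType R) (f : T -> V) (g : T -> R) :
  (\forall x & y \near F, `|f x - f y| ^+ 2 <= `|g x - g y|) ->
  cauchy (g @ F) -> cauchy (f @ F).
Proof.
move=> fg /cauchy_ballP gC; apply/cauchy_ballP => e e0.
rewrite near_map2; move: (gC _ (exprn_gt0 2 e0)); rewrite near_map2.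
apply: filterS2 fg => -[x y] /= le_fg; rewrite -!ball_normE /= => lt_g.
rewrite -(ltr_pXn2r (isT : (0 < 2)%N)) ?nnegrE ?(ltW e0) //.
exact: le_lt_trans le_fg lt_g.
Qed.

End SqrNormCauchy.

Section TikhonovLimit.
Import numFieldNormedType.Exports.

Variables (R : realType) (X : normedModType R) (Y : completeNormedModType R).
Variables (ipX : inner_product X) (ipY : inner_product Y).
Variables (A : {linear Y -> X}) (As : X -> Y) (hAs : is_adjoint ipX ipY A As).
Hypothesis hA : continuous A.
Variables (xi : X) (eta : R -> X).
Hypothesis heta : forall a, 0 < a -> A (As (eta a)) + a *: eta a = xi.

Local Notation s a := (ipX xi (eta a)).
Local Notation w a := (As (eta a)).

Lemma tikhonov_bounded_solvable M : (forall a, 0 < a -> s a <= M) -> exists y, A y = xi.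
Proof.
move=> s_le_M.
have s_cvg : cvg (s a @[a --> 0^'+]).
  apply: nonincreasing_at_right_is_cvgr; apply: nearW => c.
    move=> a b; rewrite !in_itv /= => /andP[a0 _] /andP[b0 _] ab.
    exact: (tikhonov_ip_nonincreasing hAs heta a0).
  by exists M => _ [a /andP[a0 _] <-]; exact: s_le_M.
have w_cvg : cvg (w a @[a --> 0^'+]).
  apply/cauchy_cvgP/(cauchy_sqr_norm_le (g := fun a => s a)); last exact: cvg_cauchy.
  near=> a b => /=; apply: (tikhonov_sqr_dist_le_abs hAs heta);
    [near: a | near: b]; exact: nbhs_right_gt.
have Aw_cvg : A (w a) @[a --> 0^'+] --> xi.
  apply/cvgrPdist_lt => e e0; near=> a.
  have a0 : 0 < a by near: a; exact: nbhs_right_gt.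
  rewrite -(ltr_pXn2r (isT : (0 < 2)%N)) ?nnegrE ?(ltW e0) //.
  apply: le_lt_trans (tikhonov_sqr_residual_le hAs heta a0) _.
  apply: (@le_lt_trans _ _ (a * (`|M| + 1))).
    by rewrite ler_pM2l // (le_trans (s_le_M _ a0)) // (le_trans (ler_norm M)) // lerDl.
  rewrite -ltr_pdivlMr ?ltr_wpDl //; near: a.
  by apply: nbhs_right_lt; rewrite divr_gt0 ?exprn_gt0 ?ltr_wpDl.
have Aw_lim : A (w a) @[a --> 0^'+] --> A (lim (w a @[a --> 0^'+])).
  exact: (cvg_comp _ _ w_cvg (@hA _)).
by exists (lim (w a @[a --> 0^'+])); exact: (cvg_unique _ Aw_lim Aw_cvg).
Unshelve. all: by end_near.
Qed.

Lemma tikhonov_ip_cvgy : ~ (exists y, A y = xi) -> s a @[a --> 0^'+] --> +oo.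
Proof.
move=> xi_notin_ran; apply/cvgryPge => M.
have [a a0 M_le_s] : exists2 a, 0 < a & M <= s a.
  apply: contrapT => /forall2NP no_a; apply: xi_notin_ran.
  apply: (tikhonov_bounded_solvable (M := M)) => a a0.
  by case: (no_a a) => // /negP; rewrite -ltNge => /ltW.
near=> b; apply: (le_trans M_le_s); apply: (tikhonov_ip_nonincreasing hAs heta).
  by near: b; exact: nbhs_right_gt.
by near: b; exact: nbhs_right_ltW.
Unshelve. all: by end_near.
Qed.

End TikhonovLimit.

Section NormalizedAdjoint.
Variables (R : realType) (X Y : normedModType R).
Variables (ipX : inner_product X) (ipY : inner_product Y).
Variables (B : Y -> X) (Bs : X -> Y) (hBs : is_adjoint ipX ipY B Bs).
Variables (x v : X).
Hypothesis xv_gt0 : 0 < ipX x v.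

Local Notation s := (ipX x v).
Local Notation p := (s `^ 4^-1).

Let p_gt0 : 0 < p. Proof. exact: powR_gt0. Qed.

Let s_p4 : s = p ^+ 4.
Proof. by rewrite -powRrMn ?ltW // mulVf ?pnatr_eq0 // powRr1 // ltW. Qed.

Lemma norm_adjoint_normalized : `|Bs ((s `^ (3/4))^-1 *: v)| = `|Bs v| / p ^+ 3.
Proof.
rewrite (adjointZ hBs) normrZ ger0_norm ?invr_ge0 ?powR_ge0 // mulrC.
by rewrite -powRrMn ?ltW // (mulrC 4^-1).
Qed.

(* No hypothesis [y != 0]: for [y = 0] the left-hand side is [p / 0 = 0]. *)
Lemma norm_adjoint_normalized_ge y : B y = x -> p / `|y| <= `|Bs ((s `^ (3/4))^-1 *: v)|.
Proof.
move=> Byx; rewrite norm_adjoint_normalized.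
have [->|y_neq0] := eqVneq `|y| 0; first by rewrite invr0 mulr0 divr_ge0 ?exprn_ge0 // ltW.
have y_gt0 : 0 < `|y| by rewrite lt_neqAle eq_sym y_neq0 normr_ge0.
rewrite ler_pdivlMr ?exprn_gt0 // mulrAC ler_pdivrMr // -exprS -s_p4 mulrC.
by rewrite -{1}Byx hBs ip_le_mul_norm.
Qed.

Lemma norm_adjoint_normalized_le : `|Bs v| ^+ 2 <= s -> `|Bs ((s `^ (3/4))^-1 *: v)| <= p^-1.
Proof.
move=> Bsv_sqr_le; have Bsv_le : `|Bs v| <= p ^+ 2.
  rewrite -(ler_pXn2r (isT : (0 < 2)%N)) ?nnegrE ?exprn_ge0 ?(ltW p_gt0) //.
  by rewrite -exprM -s_p4.
rewrite norm_adjoint_normalized ler_pdivrMr ?exprn_gt0 // (le_trans Bsv_le) //.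
by rewrite exprS mulrA mulVf ?gt_eqF // mul1r.
Qed.

End NormalizedAdjoint.

Theorem lemmaA2 (R : realType)
  (X Y1 Y2 : completeNormedModType R)
  (ipX : inner_product X) (ipY1 : inner_product Y1) (ipY2 : inner_product Y2)
  (A1 : {linear Y1 -> X}) (A2 : {linear Y2 -> X})
  (hA1 : continuous A1) (hA2 : continuous A2)
  (A1s : X -> Y1) (A2s : X -> Y2)
  (hA1s : is_adjoint ipX ipY1 A1 A1s) (hA2s : is_adjoint ipX ipY2 A2 A2s)
  (xi : X)
  (hran1 : exists y1 : Y1, A1 y1 = xi)
  (hran2 : ~ (exists y2 : Y2, A2 y2 = xi))
  (eta : R -> X)
  (heta : forall alpha : R, 0 < alpha ->
     A2 (A2s (eta alpha)) + alpha *: eta alpha = xi) :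
  let xi_ := fun alpha : R => (powR (ipX xi (eta alpha)) (3 / 4))^-1 *: eta alpha in
  (forall alpha : R, 0 < alpha -> 0 < ipX xi (eta alpha)) /\
  (`|A1s (xi_ alpha)| @[alpha --> 0^'+] --> +oo) /\
  (A2s (xi_ alpha) @[alpha --> 0^'+] --> 0).
Proof.
move=> xi_.
have s_gt0 a : 0 < a -> 0 < ipX xi (eta a) := tikhonov_ip_gt0 hA2s heta hran2.
have p_cvgy : ipX xi (eta a) `^ 4^-1 @[a --> 0^'+] --> +oo.
  by apply: (cvgy_powR _ (tikhonov_ip_cvgy hA2s hA2 heta hran2)); rewrite invr_gt0.
split=> //; split.
  have [y1 A1y1] := hran1.
  have y1_gt0 : 0 < `|y1|.
    rewrite normr_gt0; apply/eqP => y1_0; apply: hran2.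
    by exists 0; rewrite -A1y1 y1_0 !linear0.
  apply: ger_cvgy (gt0_cvgMly (M := `|y1|^-1) _ p_cvgy); rewrite ?invr_gt0 //.
  near=> a; apply: (norm_adjoint_normalized_ge hA1s) A1y1.
  by apply: s_gt0; near: a; exact: nbhs_right_gt.
apply/norm_cvg0P.
apply: (@squeeze_cvgr _ _ _ _ (cst 0) (fun a => (ipX xi (eta a) `^ 4^-1)^-1)).
- near=> a; have a0 : 0 < a by near: a; exact: nbhs_right_gt.
  rewrite normr_ge0 /=; apply: (norm_adjoint_normalized_le hA2s (s_gt0 _ a0)).
  exact: (tikhonov_sqr_norm_le hA2s heta).
- exact: (@cvg_cst R^o).
- apply/(gtr0_cvgV0 (f := fun a => ipX xi (eta a) `^ 4^-1)) => //.
  near=> a; apply/powR_gt0/s_gt0.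
  by near: a; exact: nbhs_right_gt.
Unshelve. all: by end_near.
Qed.
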